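(* Let $\mathfrak{g}$ be a finite-dimensional Leibniz algebra, $\mathfrak{b}$ a two-sided ideal of $\mathfrak{g}$, and $\mathfrak{a}\cong\mathfrak{g}/\mathfrak{b}$. Then $$\dim\mathcal{M}^{\mathrm{Lie}}(\mathfrak{a})\le\dim\mathcal{M}^{\mathrm{Lie}}(\mathfrak{g})+\dim\big([\mathfrak{g},\mathfrak{g}]_{\mathrm{Lie}}\cap\mathfrak{b}\big).$$
   Context: Fix a field $\mathbb{K}$ with $\frac12\in\mathbb{K}$. A Leibniz algebra is a $\mathbb{K}$-vector space with a bilinear bracket satisfying $[x,[y,z]]=[[x,y],z]-[[x,z],y]$. For two-sided ideals $\mathfrak{m},\mathfrak{n}$, $[\mathfrak{m},\mathfrak{n}]_{\mathrm{Lie}}$ is the subspace spanned by all $[m,n]+[n,m]$, $m\in\mathfrak{m},n\in\mathfrak{n}$. For a Leibniz algebra $\mathfrak{g}$ with a free presentation $0\to\mathfrak{r}\to\mathfrak{f}\to\mathfrak{g}\to0$ ($\mathfrak{f}$ a free Leibniz algebra), the Schur $\mathrm{Lie}$-multiplier is $\mathcal{M}^{\mathrm{Lie}}(\mathfrak{g})=\frac{\mathfrak{r}\cap[\mathfrak{f},\mathfrak{f}]_{\mathrm{Lie}}}{[\mathfrak{f},\mathfrak{r}]_{\mathrm{Lie}}}$, independent of the presentation up to isomorphism. *)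

From mathcomp Require Import all_boot all_algebra.
From Stdlib Require Import ClassicalEpsilon.
Set Implicit Arguments. Unset Strict Implicit. Unset Printing Implicit Defensive.
Import GRing.Theory.
Local Open Scope ring_scope.

Record leibniz (K : fieldType) := Leibniz {
  lcar :> lmodType K;
  lbr : lcar -> lcar -> lcar;
  lbr_linl : forall (c : K) (x y z : lcar), lbr (c *: x + y) z = c *: lbr x z + lbr y z;
  lbr_linr : forall (c : K) (x y z : lcar), lbr x (c *: y + z) = c *: lbr x y + lbr x z;
  lbr_leib : forall x y z : lcar,
      lbr x (lbr y z) = lbr (lbr x y) z - lbr (lbr x z) y }.

Section Defs.
Variable K : fieldType.

Definition in_span (V : lmodType K) (S : V -> Prop) (v : V) : Prop :=
  exists (n : nat) (u : 'I_n -> V) (c : 'I_n -> K),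
    (forall i, S (u i)) /\ v = \sum_(i < n) c i *: u i.

Definition is_subspace (V : lmodType K) (U : V -> Prop) : Prop :=
  U 0 /\ forall (c : K) x y, U x -> U y -> U (c *: x + y).

Definition is_ideal (L : leibniz K) (I : L -> Prop) : Prop :=
  is_subspace I /\ forall x y : L, I y -> I (lbr x y) /\ I (lbr y x).

Definition lie_comm (L : leibniz K) (M N : L -> Prop) : L -> Prop :=
  in_span (fun v => exists m n, M m /\ N n /\ v = lbr m n + lbr n m).

Definition is_hom (L1 L2 : leibniz K) (phi : L1 -> L2) : Prop :=
  (forall (c : K) (x y : L1), phi (c *: x + y) = c *: phi x + phi y) /\
  (forall x y : L1, phi (lbr x y) = lbr (phi x) (phi y)).

Definition is_free (f : leibniz K) (X : Type) (i : X -> f) : Prop :=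
  forall (L : leibniz K) (h : X -> L),
    exists phi : f -> L, [/\ is_hom phi, (forall x, phi (i x) = h x) &
      (forall psi : f -> L, is_hom psi -> (forall x, psi (i x) = h x) ->
         forall v, psi v = phi v)].

(* a free presentation 0 -> r -> f -> g -> 0, with r = ker pi *)
Definition free_presentation (f g : leibniz K) (pi : f -> g) : Prop :=
  [/\ exists (X : Type) (i : X -> f), is_free i,
      is_hom pi &
      forall y : g, exists x : f, pi x = y].

Definition kernel (L1 L2 : leibniz K) (pi : L1 -> L2) : L1 -> Prop :=
  fun v => pi v = 0.

(* "dim (U / W) <= n": U is spanned modulo W by n vectors of U *)
Definition qdim_le (V : lmodType K) (U W : V -> Prop) (n : nat) : Prop :=
  exists u : 'I_n -> V, (forall i, U (u i)) /\
    forall v, U v -> exists (c : 'I_n -> K) (w : V),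
      W w /\ v = \sum_(i < n) c i *: u i + w.

(* dim (U / W) as a natural number: the least such n (junk value if infinite) *)
Definition qdim (V : lmodType K) (U W : V -> Prop) : nat :=
  epsilon (inhabits 0%N)
    (fun n => qdim_le U W n /\ forall m, qdim_le U W m -> (n <= m)%N).

Definition zero_sub (V : lmodType K) : V -> Prop := fun v => v = 0.
Definition full_sub (V : lmodType K) : V -> Prop := fun _ => True.

Definition sdim (V : lmodType K) (U : V -> Prop) : nat := qdim U (@zero_sub V).

Definition findim (V : lmodType K) : Prop := exists n, qdim_le (@full_sub V) (@zero_sub V) n.

(* Schur Lie-multiplier computed from the free presentation pi : f -> g:
   M^Lie(g) = (r /\ [f,f]_Lie) / [f,r]_Lie with r = ker pi;
   schur_lie_dim pi is its dimension. *)
Definition schur_lie_num (f g : leibniz K) (pi : f -> g) : f -> Prop :=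
  fun v => kernel pi v /\ lie_comm (@full_sub f) (@full_sub f) v.
Definition schur_lie_den (f g : leibniz K) (pi : f -> g) : f -> Prop :=
  lie_comm (@full_sub f) (kernel pi).
Definition schur_lie_dim (f g : leibniz K) (pi : f -> g) : nat :=
  qdim (schur_lie_num pi) (schur_lie_den pi).

End Defs.

From mathcomp Require Import all_boot all_algebra.
From Stdlib Require Import ClassicalEpsilon Classical.
Set Implicit Arguments. Unset Strict Implicit. Unset Printing Implicit Defensive.
Import GRing.Theory.
Local Open Scope ring_scope.

(* Write M(q) = (ker q ∩ [f,f]_Lie) / [f, ker q]_Lie for a surjection q from a free
   Leibniz algebra f.  If π : f -> g presents g, then p ∘ π presents a, and π maps
   ker(p∘π) ∩ [f,f]_Lie onto [g,g]_Lie ∩ b with kernel ker π ∩ [f,f]_Lie; as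
   [f, ker π]_Lie ⊆ [f, ker(p∘π)]_Lie, this gives
   dim M(p∘π) ≤ dim M(π) + dim([g,g]_Lie ∩ b).  Any free presentation of a has a
   multiplier of dimension at most that of p∘π: lifting through the presentations gives
   an endomorphism of its free algebra lying over a, and such an endomorphism moves
   [f',f']_Lie only inside [f', ker]_Lie, so the lifted map onto its multiplier is
   surjective.  Since dimensions are least spanning numbers, M(π) must also be shown
   finite-dimensional: [f,f]_Lie is spanned modulo [f, ker π]_Lie by the brackets of
   lifts of a basis of g. *)

Section LinearMaps.
Variables (K : fieldType) (V W : lmodType K) (f : V -> W).
Hypothesis f_lin : linear f.

Lemma lin0 : f 0 = 0.
Proof. by have := f_lin (-1) 0 0; rewrite scaler0 addr0 scaleN1r addNr. Qed.

Lemma linD x y : f (x + y) = f x + f y.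
Proof. by have := f_lin 1 x y; rewrite !scale1r. Qed.

Lemma linZ a x : f (a *: x) = a *: f x.
Proof. by have := f_lin a x 0; rewrite !addr0 lin0 addr0. Qed.

Lemma linB x y : f (x - y) = f x - f y.
Proof. by rewrite addrC -scaleN1r f_lin scaleN1r addrC. Qed.

Lemma lin_sum (I : finType) (c : I -> K) (u : I -> V) :
  f (\sum_(i : I) c i *: u i) = \sum_(i : I) c i *: f (u i).
Proof. by rewrite (big_morph f linD lin0); apply: eq_bigr => i _; apply: linZ. Qed.

End LinearMaps.

Section Subspaces.
Variables (K : fieldType) (V : lmodType K).
Implicit Types (U S : V -> Prop).

Lemma subspace0 U : is_subspace U -> U 0.
Proof. by case. Qed.

Lemma subspaceD U x y : is_subspace U -> U x -> U y -> U (x + y).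
Proof. by move=> [_ hU] hx hy; have := hU 1 x y hx hy; rewrite scale1r. Qed.

Lemma subspaceZ U a x : is_subspace U -> U x -> U (a *: x).
Proof. by move=> [hU0 hU] hx; have := hU a x 0 hx hU0; rewrite addr0. Qed.

Lemma subspaceB U x y : is_subspace U -> U x -> U y -> U (x - y).
Proof. by move=> [_ hU] hx hy; have := hU (-1) y x hy hx; rewrite scaleN1r addrC. Qed.

Lemma subspace_sum U (I : finType) (c : I -> K) (u : I -> V) :
  is_subspace U -> (forall i, U (u i)) -> U (\sum_(i : I) c i *: u i).
Proof.
move=> hU hu; apply: (big_ind U); first exact: subspace0.
  by move=> x y; apply: subspaceD.
by move=> i _; apply: subspaceZ.
Qed.

Lemma subspaceI U S : is_subspace U -> is_subspace S -> is_subspace (fun x => U x /\ S x).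
Proof.
move=> [hU0 hU] [hS0 hS]; split=> // a x y [? ?] [? ?].
by split; [apply: hU | apply: hS].
Qed.

Lemma subspace_forall (J : Type) (U : J -> V -> Prop) :
  (forall j, is_subspace (U j)) -> is_subspace (fun x => forall j, U j x).
Proof.
move=> hU; split=> [j | a x y hx hy j]; first exact: subspace0.
by case: (hU j) => _; apply.
Qed.

Lemma subspace_preimage (V' : lmodType K) (f : V' -> V) U :
  linear f -> is_subspace U -> is_subspace (fun x => U (f x)).
Proof.
move=> f_lin [hU0 hU]; split=> [|a x y hx hy]; first by rewrite lin0.
by rewrite f_lin; apply: hU.
Qed.

Lemma zero_subspace : is_subspace (@zero_sub K V).
Proof. by split=> // a x y -> ->; rewrite scaler0 addr0. Qed.

Lemma sum_enum_val (I : finType) (F : I -> V) :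
  \sum_(i : I) F i = \sum_(k < #|I|) F (enum_val k).
Proof. by rewrite -(big_enum_val (A := I)); apply: eq_bigl => i; rewrite inE. Qed.

Lemma in_span_sum S (I : finType) (c : I -> K) (u : I -> V) :
  (forall i, S (u i)) -> in_span S (\sum_(i : I) c i *: u i).
Proof.
move=> hu; exists #|I|, (fun k => u (enum_val k)), (fun k => c (enum_val k)).
by split=> //; apply: sum_enum_val.
Qed.

Lemma in_span_mem S x : S x -> in_span S x.
Proof.
move=> hx; have := in_span_sum (fun _ : 'I_1 => 1) (fun _ => hx).
by rewrite big_ord1 scale1r.
Qed.

Lemma in_span_subspace S : is_subspace (in_span S).
Proof.
split.
  by exists 0%N, (fun _ => 0), (fun _ => 0); split; [case | rewrite big_ord0].
move=> a x y [n [u [c [hu ->]]]] [m [u' [c' [hu' ->]]]].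
pose F (k : 'I_n + 'I_m) := match k with inl i => u i | inr j => u' j end.
pose C (k : 'I_n + 'I_m) := match k with inl i => a * c i | inr j => c' j end.
have := @in_span_sum S _ C F; rewrite big_sumType /= scaler_sumr.
under [\sum_(i < n) a *: _]eq_bigr do rewrite scalerA.
by apply; case.
Qed.

Lemma in_span_min S U x :
  is_subspace U -> (forall y, S y -> U y) -> in_span S x -> U x.
Proof. by move=> hU hS [n [u [c [hu ->]]]]; apply: subspace_sum => // i; apply: hS. Qed.

End Subspaces.

Lemma subspace_image (K : fieldType) (V V' : lmodType K) (f : V -> V') (U : V -> Prop) :
  linear f -> is_subspace U -> is_subspace (fun y => exists x, U x /\ f x = y).
Proof.
move=> f_lin hU; split; first by exists 0; split; [apply: subspace0 | apply: lin0].
move=> a _ _ [x [Ux <-]] [x' [Ux' <-]]; exists (a *: x + x'); split; last exact: f_lin.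
by case: hU => _; apply.
Qed.

Lemma in_span_map (K : fieldType) (V V' : lmodType K) (f : V -> V')
    (S : V -> Prop) (T : V' -> Prop) x :
  linear f -> (forall y, S y -> T (f y)) -> in_span S x -> in_span T (f x).
Proof.
move=> f_lin hST; apply: (in_span_min (U := fun x => in_span T (f x))).
  exact: subspace_preimage f_lin (in_span_subspace T).
by move=> y /hST; apply: in_span_mem.
Qed.

Lemma in_span_mono (K : fieldType) (V : lmodType K) (S T : V -> Prop) x :
  (forall y, S y -> T y) -> in_span S x -> in_span T x.
Proof. by move=> hST; apply: (@in_span_map K V V id). Qed.

Section QuotientDimension.
Variables (K : fieldType) (V : lmodType K).
Implicit Types (U W : V -> Prop).

Definition span_mod (I : finType) (u : I -> V) W x :=
  exists (c : I -> K) (w : V), W w /\ x = \sum_(i : I) c i *: u i + w.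

Lemma span_mod_subspace (I : finType) (u : I -> V) W :
  is_subspace W -> is_subspace (span_mod u W).
Proof.
move=> hW; split.
  exists (fun _ => 0), 0; split; first exact: subspace0.
  by rewrite big1 ?addr0 // => i _; rewrite scale0r.
move=> a x y [c [w [hw ->]]] [c' [w' [hw' ->]]].
exists (fun i => a * c i + c' i), (a *: w + w'); split; first by case: hW => _; apply.
rewrite scalerDr scaler_sumr addrACA -big_split /=; congr (_ + _).
by apply: eq_bigr => i _; rewrite scalerA scalerDl.
Qed.

Lemma span_mod_mod (I : finType) (u : I -> V) W x : W x -> span_mod u W x.
Proof.
move=> hx; exists (fun _ => 0), x; split=> //.
by rewrite big1 ?add0r // => i _; rewrite scale0r.
Qed.

Lemma span_mod_gen (I : finType) (u : I -> V) W k :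
  is_subspace W -> span_mod u W (u k).
Proof.
move=> hW; exists (fun i => (i == k)%:R), 0; split; first exact: subspace0.
rewrite addr0 (bigD1 k) //= eqxx scale1r big1 ?addr0 // => i /negbTE ->.
by rewrite scale0r.
Qed.

Lemma span_mod_min (I : finType) (u : I -> V) W U x :
  is_subspace U -> (forall i, U (u i)) -> (forall w, W w -> U w) ->
  span_mod u W x -> U x.
Proof.
move=> hU hu hW [c [w [hw ->]]].
by apply: subspaceD => //; [apply: subspace_sum | apply: hW].
Qed.

Lemma span_mod_enum_val (I : finType) (u : I -> V) W x :
  span_mod u W x -> span_mod (fun k : 'I_#|I| => u (enum_val k)) W x.
Proof.
by move=> [c [w [hw ->]]]; exists (fun k => c (enum_val k)), w; rewrite sum_enum_val.
Qed.

Lemma span_mod_ord_recr N (v : 'I_N.+1 -> V) W x :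
  let v' i := v (widen_ord (leqnSn N) i) in
  span_mod v W x ->
  exists d, span_mod v' W (x - d *: v ord_max) /\ (d = 0 -> span_mod v' W x).
Proof.
move=> v' [c [w [hw ->]]]; exists (c ord_max).
split=> [|c_max0]; exists (fun i => c (widen_ord (leqnSn N) i)), w; split=> //.
  by rewrite big_ord_recr /= addrAC addrK.
by rewrite big_ord_recr /= c_max0 scale0r addr0.
Qed.

Lemma qdim_le_family (I : finType) (u : I -> V) U W :
  (forall i, U (u i)) -> (forall x, U x -> span_mod u W x) -> qdim_le U W #|I|.
Proof.
move=> hu hs; exists (fun k => u (enum_val k)); split=> // x /hs.
exact: span_mod_enum_val.
Qed.

Lemma qdim_le_cat U W n1 n2 (u1 : 'I_n1 -> V) (u2 : 'I_n2 -> V) :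
  (forall i, U (u1 i)) -> (forall j, U (u2 j)) ->
  (forall x, U x -> exists c : 'I_n2 -> K, span_mod u1 W (x - \sum_j c j *: u2 j)) ->
  qdim_le U W (n1 + n2).
Proof.
move=> hu1 hu2 hs.
pose u (k : 'I_n1 + 'I_n2) := match k with inl i => u1 i | inr j => u2 j end.
suff : qdim_le U W #|{: 'I_n1 + 'I_n2}| by rewrite card_sum !card_ord.
apply: (qdim_le_family (u := u)); first by case.
move=> x /hs [c2 [c1 [w [hw hx]]]].
exists (fun k => match k with inl i => c1 i | inr j => c2 j end), w; split=> //.
by rewrite big_sumType /= addrAC -hx subrK.
Qed.

Lemma qdim_le_mono_mod U W W' n :
  (forall w, W w -> W' w) -> qdim_le U W n -> qdim_le U W' n.
Proof.
move=> hWW' [u [hu hs]]; exists u; split=> // x /hs [c [w [hw ->]]].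
by exists c, w; split=> //; apply: hWW'.
Qed.

Lemma exists_qdim_le_ord N (v : 'I_N -> V) U W :
  is_subspace U -> is_subspace W -> (forall x, U x -> span_mod v W x) ->
  exists n, qdim_le U W n.
Proof.
elim: N v U => [|N IH] v U hU hW hs.
  exists 0%N, (fun _ => 0); split=> [[] //|x /hs [c [w [hw ->]]]].
  by exists c, w; rewrite !big_ord0.
pose v' i := v (widen_ord (leqnSn N) i).
case: (classic (forall x, U x -> span_mod v' W x)) => [all_in | ].
  exact: IH all_in.
move=> /not_all_ex_not [x0 x0_bad]; have [Ux0 x0_out] := imply_to_and _ _ x0_bad.
pose U' x := U x /\ span_mod v' W x.
have hU' : is_subspace U' by apply: subspaceI => //; apply: span_mod_subspace.
have [n [u [hu hsu]]] := IH v' U' hU' hW (fun x (hx : U' x) => hx.2).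
exists (n + 1)%N; apply: (qdim_le_cat (u2 := fun _ : 'I_1 => x0)) => [i|//|x Ux].
  exact: (hu i).1.
have [d0 [hx0 d0_out]] := span_mod_ord_recr (hs _ Ux0).
have d0_neq0 : d0 != 0 by apply/eqP => /d0_out.
have [d [hx _]] := span_mod_ord_recr (hs _ Ux).
(* x - (d / d0) x0 has no component along the last generator *)
exists (fun _ => d / d0); rewrite big_ord1; apply: hsu; split.
  by apply: subspaceB => //; apply: subspaceZ.
have -> : x - (d / d0) *: x0 = x - d *: v ord_max - (d / d0) *: (x0 - d0 *: v ord_max).
  by rewrite scalerBr scalerA divfK // opprB addrA subrK.
have hS := span_mod_subspace v' hW.
by apply: subspaceB => //; apply: subspaceZ.
Qed.

Lemma exists_qdim_le (I : finType) (v : I -> V) U W :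
  is_subspace U -> is_subspace W -> (forall x, U x -> span_mod v W x) ->
  exists n, qdim_le U W n.
Proof.
move=> hU hW hs; apply: (exists_qdim_le_ord (v := fun k : 'I_#|I| => v (enum_val k)) hU hW).
by move=> x /hs /span_mod_enum_val.
Qed.

Lemma findim_qdim_le U : findim V -> is_subspace U -> exists n, qdim_le U (@zero_sub K V) n.
Proof.
move=> [N [e [_ he]]] hU; apply: (exists_qdim_le_ord hU (@zero_subspace K V)) => x _.
exact: he.
Qed.

Lemma ex_least_nat (P : nat -> Prop) :
  (exists n, P n) -> exists n, P n /\ forall m, P m -> (n <= m)%N.
Proof.
move=> exP; pose Pb n : bool := if excluded_middle_informative (P n) then true else false.
have PbP n : Pb n <-> P n by rewrite /Pb; case: excluded_middle_informative.
have [|n /PbP Pn n_min] := ex_minnP (P := Pb); first by case: exP => n /PbP; exists n.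
by exists n; split=> // m /PbP /n_min.
Qed.

Lemma qdimP U W : (exists n, qdim_le U W n) ->
  qdim_le U W (qdim U W) /\ forall m, qdim_le U W m -> (qdim U W <= m)%N.
Proof. by move=> /ex_least_nat exP; apply: (epsilon_spec _ _ exP). Qed.

End QuotientDimension.

Section QuotientDimensionMaps.
Variables (K : fieldType) (V V' : lmodType K) (f : V -> V').
Hypothesis f_lin : linear f.

Lemma qdim_le_image (U W : V -> Prop) (U' W' : V' -> Prop) n :
  is_subspace W' -> (forall x, U x -> U' (f x)) -> (forall w, W w -> W' (f w)) ->
  (forall y, U' y -> exists x, U x /\ W' (y - f x)) ->
  qdim_le U W n -> qdim_le U' W' n.
Proof.
move=> hW' fU fW onto [u [hu hs]]; exists (fun i => f (u i)); split=> [i|y].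
  exact: fU.
move=> /onto [x [/hs [c [w [hw def_x]]] hy]].
exists c, (f w + (y - f x)); split; first exact: subspaceD hW' (fW _ hw) hy.
by rewrite addrA -(lin_sum f_lin) -(linD f_lin) -def_x addrC subrK.
Qed.

Lemma qdim_le_exact (U U1 W : V -> Prop) (B : V' -> Prop) n1 n2 :
  is_subspace U -> (forall x, U1 x -> U x) -> (forall x, U x -> B (f x)) ->
  (forall y, B y -> exists x, U x /\ f x = y) ->
  (forall x, U x -> f x = 0 -> U1 x) ->
  qdim_le U1 W n1 -> qdim_le B (@zero_sub K V') n2 -> qdim_le U W (n1 + n2).
Proof.
move=> hU U1U fU onto fker [u [hu hsu]] [z [hz hsz]].
have [y hy] : exists y : 'I_n2 -> V, forall j, U (y j) /\ f (y j) = z j.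
  exact: choice _ _ (fun j y => U y /\ f y = z j) (fun j => onto _ (hz j)).
apply: (qdim_le_cat (u1 := u) (u2 := y)) => [i|j|x Ux]; first exact: U1U.
  exact: (hy j).1.
have [d [w0 [-> fx]]] := hsz _ (fU _ Ux).
exists d; apply: hsu; apply: fker.
  by apply: (subspaceB hU Ux); apply: (subspace_sum _ hU) => j; apply: (hy j).1.
rewrite (linB f_lin) (lin_sum f_lin).
by under eq_bigr => j _ do rewrite (hy j).2; rewrite fx addr0 subrr.
Qed.

End QuotientDimensionMaps.

Section LeibnizAlgebras.
Variable K : fieldType.

Definition symbr (L : leibniz K) (m n : L) : L := lbr m n + lbr n m.

Lemma symbrC (L : leibniz K) (m n : L) : symbr m n = symbr n m.
Proof. by rewrite /symbr addrC. Qed.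

Lemma symbr_linr (L : leibniz K) (m : L) : linear (symbr m).
Proof. by move=> a x y; rewrite /symbr lbr_linr lbr_linl scalerDr addrACA. Qed.

Lemma symbr_linl (L : leibniz K) (n : L) : linear (fun m : L => symbr m n).
Proof. by move=> a x y /=; rewrite !(symbrC _ n) symbr_linr. Qed.

Lemma lie_comm_subspace (L : leibniz K) (M N : L -> Prop) : is_subspace (lie_comm M N).
Proof. exact: in_span_subspace. Qed.

Lemma lie_comm_symbr (L : leibniz K) (M N : L -> Prop) m n :
  M m -> N n -> lie_comm M N (symbr m n).
Proof. by move=> hm hn; apply: in_span_mem; exists m, n. Qed.

Lemma kernel_subspace (L1 L2 : leibniz K) (phi : L1 -> L2) :
  is_hom phi -> is_subspace (kernel phi).
Proof.
move=> [phi_lin _]; split=> [|a x y]; first exact: lin0 phi_lin.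
by rewrite /kernel phi_lin => -> ->; rewrite scaler0 addr0.
Qed.

Lemma hom_linear (L1 L2 : leibniz K) (phi : L1 -> L2) : is_hom phi -> linear phi.
Proof. by case. Qed.

Lemma hom_comp (L1 L2 L3 : leibniz K) (phi : L2 -> L3) (psi : L1 -> L2) :
  is_hom phi -> is_hom psi -> is_hom (fun x => phi (psi x)).
Proof. by move=> [phi_lin phi_br] [psi_lin psi_br]; split=> *; rewrite ?psi_lin ?psi_br. Qed.

Lemma hom_symbr (L1 L2 : leibniz K) (phi : L1 -> L2) m n :
  is_hom phi -> phi (symbr m n) = symbr (phi m) (phi n).
Proof. by move=> [phi_lin phi_br]; rewrite /symbr (linD phi_lin) !phi_br. Qed.

Lemma hom_lie_comm (L1 L2 : leibniz K) (phi : L1 -> L2) (M N : L1 -> Prop)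
    (M' N' : L2 -> Prop) v :
  is_hom phi -> (forall m, M m -> M' (phi m)) -> (forall n, N n -> N' (phi n)) ->
  lie_comm M N v -> lie_comm M' N' (phi v).
Proof.
move=> phi_hom hM hN; apply: in_span_map; first exact: hom_linear.
move=> _ [m [n [hm [hn ->]]]]; exists (phi m), (phi n).
by split; [apply: hM | split; [apply: hN | apply: hom_symbr]].
Qed.

Lemma lie_comm_lift (L1 L2 : leibniz K) (phi : L1 -> L2) y :
  is_hom phi -> (forall y, exists x, phi x = y) ->
  lie_comm (@full_sub K L2) (@full_sub K L2) y ->
  exists x, lie_comm (@full_sub K L1) (@full_sub K L1) x /\ phi x = y.
Proof.
move=> phi_hom phi_onto.
apply: (in_span_min (subspace_image (hom_linear phi_hom) (lie_comm_subspace _ _))).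
move=> _ [m [n [_ [_ ->]]]]; have [[m' <-] [n' <-]] := (phi_onto m, phi_onto n).
by exists (symbr m' n'); split; [apply: lie_comm_symbr | apply: hom_symbr].
Qed.

Lemma free_lift (f L1 L2 : leibniz K) (q : f -> L2) (pi : L1 -> L2) :
  (exists (X : Type) (i : X -> f), is_free i) -> is_hom q -> is_hom pi ->
  (forall y, exists x, pi x = y) ->
  exists th : f -> L1, is_hom th /\ forall v, pi (th v) = q v.
Proof.
move=> [X [i i_free]] q_hom pi_hom pi_onto.
have [h pi_h] : exists h : X -> L1, forall t, pi (h t) = q (i t).
  exact: choice _ _ (fun t x => pi x = q (i t)) (fun t => pi_onto _).
have [th [th_hom th_i _]] := i_free L1 h.
have [ext [_ _ ext_unique]] := i_free L2 (fun t => q (i t)).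
exists th; split=> // v.
rewrite (ext_unique _ (hom_comp pi_hom th_hom)) ?(ext_unique q q_hom) // => t.
by rewrite th_i pi_h.
Qed.

Lemma lie_comm_retract (f L : leibniz K) (pi : f -> L) (ph : f -> f) v :
  is_hom pi -> is_hom ph -> (forall x, pi (ph x) = pi x) ->
  lie_comm (@full_sub K f) (@full_sub K f) v ->
  lie_comm (@full_sub K f) (kernel pi) (v - ph v).
Proof.
move=> pi_hom ph_hom pi_ph.
have ker_diff x : kernel pi (x - ph x).
  by rewrite /kernel (linB (hom_linear pi_hom)) pi_ph subrr.
have diff_lin : linear (fun x => x - ph x).
  by move=> a x y; rewrite (hom_linear ph_hom) scalerBr opprD addrACA.
apply: (in_span_min (subspace_preimage diff_lin (lie_comm_subspace _ _))).
move=> _ [m [n [_ [_ ->]]]]; rewrite -/(symbr m n) hom_symbr //.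
have -> : symbr m n - symbr (ph m) (ph n) =
          symbr n (m - ph m) + symbr (ph m) (n - ph n).
  rewrite (symbrC n) (linB (symbr_linl n)) (linB (symbr_linr (ph m))).
  by rewrite addrA subrK.
by apply: subspaceD; [apply: lie_comm_subspace | apply: lie_comm_symbr ..].
Qed.

End LeibnizAlgebras.

Lemma schur_lie_den_subspace (K : fieldType) (f g : leibniz K) (pi : f -> g) :
  is_subspace (schur_lie_den pi).
Proof. exact: lie_comm_subspace. Qed.

Lemma schur_lie_num_subspace (K : fieldType) (f g : leibniz K) (pi : f -> g) :
  is_hom pi -> is_subspace (schur_lie_num pi).
Proof.
by move=> pi_hom; apply: subspaceI (kernel_subspace pi_hom) (lie_comm_subspace _ _).
Qed.

Section SchurLieMultiplier.
Variables (K : fieldType) (f g : leibniz K) (pi : f -> g).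
Hypotheses (pi_hom : is_hom pi) (pi_onto : forall y, exists x, pi x = y).

Lemma findim_span_mod_kernel :
  findim g -> exists N (x : 'I_N -> f), forall m, span_mod x (kernel pi) m.
Proof.
move=> [N [e [_ e_span]]].
have [x pi_x] : exists x : 'I_N -> f, forall j, pi (x j) = e j.
  exact: choice _ _ (fun j x => pi x = e j) (fun j => pi_onto _).
exists N, x => m; have [c [w [-> pi_m]]] := e_span (pi m) I.
exists c, (m - \sum_j c j *: x j); split; last by rewrite addrC subrK.
rewrite /kernel (linB (hom_linear pi_hom)) (lin_sum (hom_linear pi_hom)).
by under eq_bigr => j _ do rewrite pi_x; rewrite pi_m addr0 subrr.
Qed.

Lemma lie_comm_span_mod N (x : 'I_N -> f) :
  (forall m, span_mod x (kernel pi) m) ->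
  forall v, lie_comm (@full_sub K f) (@full_sub K f) v ->
  span_mod (fun k : 'I_N * 'I_N => symbr (x k.1) (x k.2)) (schur_lie_den pi) v.
Proof.
move=> x_span; set P := fun k => _; set T := span_mod P _.
have hT : is_subspace T := span_mod_subspace P (schur_lie_den_subspace pi).
have den_T r y : kernel pi r -> T (symbr y r).
  by move=> hr; apply: span_mod_mod; apply: lie_comm_symbr hr.
(* By bilinearity it suffices to bracket generators x_j or elements of ker pi. *)
have symbr_T m n : T (symbr m n).
  move: n; apply: (span_mod_min (U := fun m => forall n, T (symbr m n)) _ _ _ (x_span m)).
  - exact: subspace_forall (fun n => subspace_preimage (symbr_linl n) hT).
  - move=> j n; apply: (span_mod_min (U := fun n => T (symbr (x j) n)) _ _ _ (x_span n)).
    + exact: subspace_preimage (symbr_linr (x j)) hT.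
    + by move=> l; apply: (span_mod_gen P (j, l) (schur_lie_den_subspace pi)).
    + by move=> r hr; apply: den_T.
  - by move=> r hr n; rewrite symbrC; apply: den_T.
by move=> v; apply: (in_span_min hT) => _ [m [n [_ [_ ->]]]]; apply: symbr_T.
Qed.

Lemma schur_lie_fin :
  findim g -> exists n, qdim_le (schur_lie_num pi) (schur_lie_den pi) n.
Proof.
move=> /findim_span_mod_kernel [N [x x_span]].
apply: (exists_qdim_le (schur_lie_num_subspace pi_hom) (schur_lie_den_subspace pi)).
by move=> v [_ hv]; apply: lie_comm_span_mod x_span v hv.
Qed.

Lemma schur_lie_quotient (a : leibniz K) (p : g -> a) (b : g -> Prop) n1 n2 :
  is_hom p -> (forall x, p x = 0 <-> b x) ->
  qdim_le (schur_lie_num pi) (schur_lie_den pi) n1 ->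
  qdim_le (fun v => lie_comm (@full_sub K g) (@full_sub K g) v /\ b v) (@zero_sub K g) n2 ->
  qdim_le (schur_lie_num (fun x => p (pi x))) (schur_lie_den (fun x => p (pi x))) (n1 + n2).
Proof.
move=> p_hom ker_p num_le B_le.
have ker_pi x : kernel pi x -> kernel (fun x => p (pi x)) x.
  by rewrite /kernel => ->; apply: lin0 (hom_linear p_hom).
have num_le' : qdim_le (schur_lie_num pi) (schur_lie_den (fun x => p (pi x))) n1.
  apply: qdim_le_mono_mod num_le => w; apply: in_span_mono.
  by move=> _ [m [n [_ [hn ->]]]]; exists m, n; split=> //; split; first exact: ker_pi.
apply: (qdim_le_exact (hom_linear pi_hom) _ _ _ _ _ num_le' B_le).
- exact: schur_lie_num_subspace (hom_comp p_hom pi_hom).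
- by move=> x [/ker_pi].
- move=> x [px hx]; split; last exact/ker_p.
  exact: hom_lie_comm pi_hom (fun _ _ => I) (fun _ _ => I) hx.
- move=> y [hy /ker_p py]; have [x [hx pi_x]] := lie_comm_lift pi_hom pi_onto hy.
  by exists x; split=> //; split=> //; rewrite /kernel pi_x.
- by move=> x [_ hx] pi_x.
Qed.

End SchurLieMultiplier.

Lemma schur_lie_transfer (K : fieldType) (f f' a : leibniz K) (q : f -> a) (q' : f' -> a) n :
  (exists (X : Type) (i : X -> f), is_free i) ->
  (exists (X : Type) (i : X -> f'), is_free i) ->
  is_hom q -> (forall y, exists x, q x = y) ->
  is_hom q' -> (forall y, exists x, q' x = y) ->
  qdim_le (schur_lie_num q) (schur_lie_den q) n ->
  qdim_le (schur_lie_num q') (schur_lie_den q') n.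
Proof.
move=> f_free f'_free q_hom q_onto q'_hom q'_onto.
have [th [th_hom q_th]] := free_lift f'_free q'_hom q_hom q_onto.
have [ps [ps_hom q'_ps]] := free_lift f_free q_hom q'_hom q'_onto.
have ker_ps x : kernel q x -> kernel q' (ps x) by rewrite /kernel q'_ps.
apply: (qdim_le_image (hom_linear ps_hom)).
- exact: schur_lie_den_subspace.
- move=> x [qx hx]; split; first exact: ker_ps.
  exact: hom_lie_comm ps_hom (fun _ _ => I) (fun _ _ => I) hx.
- by move=> w; apply: hom_lie_comm ps_hom (fun _ _ => I) ker_ps.
- move=> y [q'y hy]; exists (th y); split.
    split; first by rewrite /kernel q_th.
    exact: hom_lie_comm th_hom (fun _ _ => I) (fun _ _ => I) hy.
  have q'_ps_th x : q' (ps (th x)) = q' x by rewrite q'_ps q_th.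
  exact: lie_comm_retract q'_hom (hom_comp ps_hom th_hom) q'_ps_th hy.
Qed.

Theorem mainTheorem4 (K : fieldType) (h2 : (2%:R : K) != 0)
  (g : leibniz K) (hg : findim g)
  (b : g -> Prop) (hb : is_ideal b)
  (a : leibniz K) (p : g -> a) (hp : is_hom p)
  (hps : forall y : a, exists x : g, p x = y)
  (hker : forall x : g, p x = 0 <-> b x)
  (fg : leibniz K) (pig : fg -> g) (hpg : free_presentation pig)
  (fa : leibniz K) (pia : fa -> a) (hpa : free_presentation pia) :
  (schur_lie_dim pia <=
     schur_lie_dim pig
     + sdim (fun v : g => lie_comm (@full_sub _ g) (@full_sub _ g) v /\ b v))%N.
Proof.
case: hpg hpa => [fg_free pig_hom pig_onto] [fa_free pia_hom pia_onto].
have p_pig_onto y : exists x, p (pig x) = y.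
  by have [z <-] := hps y; have [x <-] := pig_onto z; exists x.
have [Mg_le _] := qdimP (schur_lie_fin pig_hom pig_onto hg).
have [B_le _] := qdimP (findim_qdim_le hg
  (subspaceI (lie_comm_subspace (@full_sub _ g) (@full_sub _ g)) hb.1)).
have Mq_le := schur_lie_quotient pig_hom pig_onto hp hker Mg_le B_le.
have Ma_le := schur_lie_transfer fg_free fa_free (hom_comp hp pig_hom) p_pig_onto
  pia_hom pia_onto Mq_le.
by have [_ /(_ _ Ma_le)] := qdimP (ex_intro _ _ Ma_le).
Qed.
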